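(* Let $\mathcal{A}$ be a strong $T_0$-family and let $\|x\|_{2,\mathcal{A}}=\|x\|_2+\|x\|_\mathcal{A}$ for $x\in\ell_2(\omega_1)$. Then the space $(\ell_2(\omega_1),\|\cdot\|_{2,\mathcal{A}})$ does not contain any uncountable equilateral set.
   Context: $\|\cdot\|_2$ is the Hilbert norm of $\ell_2(\omega_1)$ and $\|x\|_\mathcal{A}=\sup_{A\in\mathcal{A}}\sqrt{\sum_{\alpha\in A}x(\alpha)^2}$; $\|\cdot\|_{2,\mathcal{A}}$ is an equivalent norm on $\ell_2(\omega_1)$. A set $\mathcal{Y}$ is equilateral if there is $\delta>0$ with $\|y-y'\|=\delta$ for all distinct $y,y'\in\mathcal{Y}$. For disjoint $A,B$, $A\otimes B=\{\{\alpha,\beta\}:\alpha\in A,\beta\in B\}$. A function $c=(c_0,c_1):[\omega_1]^2\to I\times J$ ($0,1\in I$, $J\ne\emptyset$) is a $T$-coloring if for every uncountable pairwise disjoint family $\{\{a_\xi(0),a_\xi(1)\}:\xi<\omega_1\}$ of pairs and all $(i_0,j_0),(i_1,j_1)\in I\times J$ there are $\xi<\eta$ with $c(\{a_\xi(0),a_\eta(0)\})=(i_0,j_0)$, $c(\{a_\xi(1),a_\eta(1)\})=(i_1,j_1)$; it is a strong $T$-coloring if moreover for every uncountable pairwise disjoint family $\{A_\xi:\xi<\omega_1\}$ of finite subsets of $\omega_1$ there are $\xi<\eta$ with $c_0[A_\xi\otimes A_\eta]=\{0\}$ and $\xi<\eta$ with $c_0[A_\xi\otimes A_\eta]=\{1\}$.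 A strong $T_0$-family is $\mathcal{A}_c=\{a\subseteq\omega_1\text{ finite}:c_0[[a]^2]\subseteq\{0\}\}$ for a strong $T$-coloring $c$. *)

From HB Require Import structures.
From mathcomp Require Import all_boot all_order all_algebra.
From mathcomp Require Import all_classical all_reals ereal esum.
Set Implicit Arguments. Unset Strict Implicit. Unset Printing Implicit Defensive.
Import Order.TTheory GRing.Theory Num.Theory.
Local Open Scope classical_set_scope.
Local Open Scope ring_scope.

(* omega_1, characterised up to isomorphism: an uncountable well-order  *)
(* all of whose proper initial segments are countable.                  *)
Definition is_omega1 (d : Order.disp_t) (W : orderType d) : Prop :=
  well_founded (fun a b : W => (a < b)%O) /\
  ~ countable [set: W] /\
  (forall b : W, countable [set a : W | (a < b)%O]).

(* colorings of [W]^2 are represented by their values on pairs a < b.   *)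
Definition pcol (d : Order.disp_t) (W : orderType d) (K : Type)
  (c : W -> W -> K) (a b : W) : K :=
  if (a < b)%O then c a b else c b a.

(* T-coloring c = (c_0, c_1) : [W]^2 -> I x J, with 0 = i0, 1 = i1. *)
Definition T_coloring (d : Order.disp_t) (W : orderType d) (I J : Type)
  (c : W -> W -> I * J) : Prop :=
  forall (a0 a1 : W -> W),
    (forall xi, (a0 xi < a1 xi)%O) ->
    (forall xi eta, xi <> eta ->
       [set a0 xi; a1 xi] `&` [set a0 eta; a1 eta] = set0) ->
    forall (p0 p1 : I * J), exists xi eta : W, (xi < eta)%O /\
      pcol c (a0 xi) (a0 eta) = p0 /\ pcol c (a1 xi) (a1 eta) = p1.

Definition c0_image (d : Order.disp_t) (W : orderType d) (I J : Type)
  (c : W -> W -> I * J) (A B : set W) : set I :=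
  [set (pcol c a b).1 | a in A & b in B].

Definition strong_T_coloring (d : Order.disp_t) (W : orderType d) (I J : Type)
  (i0 i1 : I) (c : W -> W -> I * J) : Prop :=
  T_coloring c /\
  forall (A : W -> set W),
    (forall xi, finite_set (A xi)) ->
    (forall xi, A xi !=set0) ->
    (forall xi eta, xi <> eta -> A xi `&` A eta = set0) ->
    (exists xi eta : W, (xi < eta)%O /\ c0_image c (A xi) (A eta) = [set i0]) /\
    (exists xi eta : W, (xi < eta)%O /\ c0_image c (A xi) (A eta) = [set i1]).

Definition T0_family (d : Order.disp_t) (W : orderType d) (I J : Type)
  (i0 : I) (c : W -> W -> I * J) : set (set W) :=
  [set a | finite_set a /\
     forall x y, a x -> a y -> x <> y -> (pcol c x y).1 = i0].

Definition l2 (R : realType) (T : choiceType) : set (T -> R) :=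
  [set x | (\esum_(i in [set: T]) ((x i ^+ 2)%:E) < +oo)%E].

Definition norm2 (R : realType) (T : choiceType) (x : T -> R) : R :=
  Num.sqrt (fine (\esum_(i in [set: T]) ((x i ^+ 2)%:E))).

Definition normA (R : realType) (T : choiceType) (F : set (set T)) (x : T -> R) : R :=
  sup [set Num.sqrt (fine (\esum_(i in A) ((x i ^+ 2)%:E))) | A in F].

Definition norm2A (R : realType) (T : choiceType) (F : set (set T)) (x : T -> R) : R :=
  norm2 x + normA F x.

From HB Require Import structures.
From mathcomp Require Import all_boot all_order all_algebra.
From mathcomp Require Import all_classical all_reals ereal esum.
From mathcomp Require Import ring lra.
Import Order.TTheory GRing.Theory Num.Theory.
Local Open Scope classical_set_scope.
Local Open Scope ring_scope.
Set Implicit Arguments. Unset Strict Implicit. Unset Printing Implicit Defensive.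

(* Suppose [Y] is an uncountable equilateral set at distance [delta].  Thinning [Y]
   out (pigeonhole principles and the Delta-system lemma on omega_1) we may assume that
   every [y] in [Y] is, up to a tiny l_2 error, supported on a finite set [S y], that
   the [S y] form a Delta-system with root [D] on which all the [y] almost agree, and
   that both the l_2 mass of [y] on its private part [S y \ D] and the A-norm [g] of
   that private part are almost constant, with [g > 0].  The l_2 distance between two
   members is then almost constant as well.  The strong T-coloring gives a pair whose
   private parts are c_0-coloured 0 across, so that norming sets of the two parts can
   be glued into one set of the family and ||y - y'||_A ~ sqrt 2 g, and a pair coloured
   1 across, for which every set of the family meets only one private part, so that
   ||y - y'||_A ~ g.  Both pairs being at distance [delta], this is impossible. *)

Section countability.
Variable T : Type.
Implicit Types A B U : set T.

Lemma countable_setU A B : countable A -> countable B -> countable (A `|` B).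
Proof.
move=> cA cB.
apply: (@sub_countable _ _ _ (\bigcup_(i in [set: bool]) (if i then A else B))).
  by apply: subset_card_le => x [Ax|Bx]; [exists true|exists false].
by apply: bigcup_countable => // -[].
Qed.

Lemma not_countable_setD U A : ~ countable U -> countable A -> ~ countable (U `\` A).
Proof.
move=> cU cA cUA; apply: cU; apply: (@sub_countable _ _ _ ((U `\` A) `|` A)).
  by apply: subset_card_le => x Ux; have [|] := pselect (A x); [right|left].
exact: countable_setU.
Qed.

Lemma not_countable_nonempty U : ~ countable U -> U !=set0.
Proof.
move=> cU; apply: contra_notP cU => /set0P/negP/negPn/eqP ->.
exact: countable0.
Qed.

Lemma not_countable_two U : ~ countable U -> exists x y, [/\ U x, U y & x <> y].
Proof.
move=> cU; have [x Ux] := not_countable_nonempty cU.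
have [y [Uy yx]] := not_countable_nonempty (not_countable_setD cU (countable1 x)).
by exists x, y; split => // xy; apply: yx; rewrite xy.
Qed.

Lemma not_countable_bigcup (K : Type) (D : set K) (F : K -> set T) U :
  countable D -> ~ countable U -> U `<=` \bigcup_(k in D) F k ->
  exists2 k, D k & ~ countable (U `&` F k).
Proof.
move=> cD cU UF; apply: contra_notP cU => H.
apply: (@sub_countable _ _ _ (\bigcup_(k in D) (U `&` F k))).
  by apply: subset_card_le => x Ux; have [k Dk Fkx] := UF x Ux; exists k.
by apply: bigcup_countable => // k Dk; apply: contra_notP H => ?; exists k.
Qed.

Lemma not_countable_fiber (C : countType) (f : T -> C) U :
  ~ countable U -> exists k, ~ countable (U `&` [set x | f x = k]).
Proof.
move=> cU.
have [|k _] := @not_countable_bigcup _ setT (fun k => [set x | f x = k]) U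
  (countableP _) cU; first by move=> x _; exists (f x).
by exists k.
Qed.

End countability.

Section omega1.
Variables (d : Order.disp_t) (W : orderType d).
Hypothesis W_omega1 : is_omega1 W.

Lemma omega1_injective_range (T : Type) (g : W -> T) :
  injective g -> ~ countable (range g).
Proof.
move=> g_inj /countable_injP [f /= f_inj]; have [_ [cW _]] := W_omega1.
apply: cW; apply/countable_injP; exists (f \o g) => a b _ _ /= fgab.
by apply: g_inj; apply: f_inj fgab; rewrite inE; [exists a|exists b].
Qed.

(* By recursion on [W]: [g a] is any point of [U] outside the [g b] and [N (g b)],
   [b < a], of which there are countably many since initial segments are countable. *)
Lemma omega1_free_sequence (T : Type) (U : set T) (N : T -> set T) :
  ~ countable U -> (forall x, countable (N x)) ->
  exists g : W -> T, [/\ forall a, U (g a), injective g &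
    forall a b, (a < b)%O -> ~ N (g a) (g b)].
Proof.
move=> cU cN; have [x0 _] := not_countable_nonempty cU.
have [wf [_ cseg]] := W_omega1.
pose P (a : W) (rec : forall b : W, (b < a)%O -> T) (x : T) :=
  U x /\ forall b (h : (b < a)%O), x <> rec b h /\ ~ N (rec b h) x.
pose step (a : W) (rec : forall b : W, (b < a)%O -> T) : T :=
  if pselect (exists x, P a rec x) is left h then proj1_sig (cid h) else x0.
pose g := Fix wf (fun _ => T) step.
have gE a : g a = step a (fun b _ => g b).
  rewrite /g Fix_eq // => a' f f' ff'.
  congr step; apply: functional_extensionality_dep => b.
  exact: functional_extensionality_dep.
have Pg a : P a (fun b _ => g b) (g a).
  have [x Px] : exists x, P a (fun b _ => g b) x.
    pose E := \bigcup_(b in [set b | (b < a)%O]) ([set g b] `|` N (g b)).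
    have cE : countable E.
      by apply: bigcup_countable => // b _; apply: countable_setU.
    have [x [Ux nEx]] := not_countable_nonempty (not_countable_setD cU cE).
    by exists x; split => // b ba; split => [xg|Nx]; apply: nEx; exists b => //;
      [left|right].
  rewrite [X in P _ _ X]gE /step; case: pselect => [h|]; last by case; exists x.
  exact: (proj2_sig (cid h)).
exists g; split => [a|a b gab|a b ab]; first by case: (Pg a).
  have [ab|ba|->//] := ltgtP a b.
  - by case: (Pg b) => _ /(_ _ ab) [/(_ (esym gab))].
  - by case: (Pg a) => _ /(_ _ ba) [/(_ gab)].
by case: (Pg b) => _ /(_ a ab) [].
Qed.

Lemma delta_system_bounded (T : Type) (K : eqType) (n : nat) (U : set T)
    (S : T -> seq K) :
  ~ countable U -> (forall x, U x -> uniq (S x) /\ (size (S x) <= n)%N) ->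
  exists D, exists2 U', U' `<=` U /\ ~ countable U' &
    forall x y, U' x -> U' y -> x <> y -> [set` S x] `&` [set` S y] = D.
Proof.
elim: n U S => [|n IH] U S cU HS.
  exists set0, U; first by split.
  move=> x y Ux Uy _.
  have -> : S x = [::] by case: (HS x Ux) => _; case: (S x).
  by apply/seteqP; split => i [].
have [[p cp]|np] := pselect (exists p, ~ countable (U `&` [set x | p \in S x])).
  have [|D [U' [U'U cU'] HD]] := IH _ (fun x => rem p (S x)) cp.
    move=> x [Ux px]; have [uS sS] := HS x Ux; split; first exact: rem_uniq.
    by rewrite size_rem //; move: sS; case: (size (S x)).
  exists (D `|` [set p]), U'; first by split => [x /U'U []|].
  move=> x y U'x U'y xy; rewrite -(HD x y U'x U'y xy).
  have [[Ux px] [Uy py]] := (U'U x U'x, U'U y U'y).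
  have [[ux _] [uy _]] := (HS x Ux, HS y Uy).
  apply/seteqP; split => i /=.
    move=> [ix iy]; have [->|ip] := eqVneq i p; first by right.
    by left; rewrite !mem_rem_uniq // !inE ip ix iy.
  move=> [[]|->]; last by split.
  by rewrite !mem_rem_uniq // !inE => /andP [_ ->] /andP [_ ->].
pose N x := U `&` [set y | has (mem (S y)) (S x)].
have cN x : countable (N x).
  apply: (@sub_countable _ _ _ (\bigcup_(p in [set` S x]) (U `&` [set y | p \in S y]))).
    by apply: subset_card_le => y [Uy /hasP [p px py]]; exists p.
  apply: bigcup_countable => [|p _]; first exact: finite_set_countable.
  by apply: contra_notP np => ?; exists p.
have [g [Ug g_inj Ng]] := omega1_free_sequence cU cN.
exists set0, (range g); first by split; [move=> _ [a _ <-] | exact: omega1_injective_range].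
have disj a b : (a < b)%O -> [set` S (g a)] `&` [set` S (g b)] = set0.
  move=> ab; apply/seteqP; split => i // [ia ib]; apply: (Ng _ _ ab).
  by split => //; apply/hasP; exists i.
move=> _ _ [a _ <-] [b _ <-] gab; case: (ltgtP a b) => [ab|ba|ab].
- exact: disj.
- by rewrite setIC; exact: disj.
- by rewrite ab in gab.
Qed.

Lemma delta_system (T : Type) (K : eqType) (U : set T) (S : T -> seq K) :
  ~ countable U ->
  exists D, exists2 U', U' `<=` U /\ ~ countable U' &
    forall x y, U' x -> U' y -> x <> y -> [set` S x] `&` [set` S y] = D.
Proof.
move=> cU; have [n cUn] := not_countable_fiber (fun x => size (undup (S x))) cU.
have [|D [U' [U'U cU'] HD]] := @delta_system_bounded _ _ n _ (fun x => undup (S x)) cUn.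
  by move=> x [_ /= sx]; rewrite undup_uniq sx.
exists D, U'; first by split => [x /U'U []|].
move=> x y U'x U'y xy; rewrite -(HD x y U'x U'y xy).
by apply/seteqP; split => i /=; rewrite !mem_undup.
Qed.

End omega1.

Lemma sqr_le_sqr (R : realDomainType) (u v : R) : 0 <= u -> u <= v -> u ^+ 2 <= v ^+ 2.
Proof. by move=> u0 uv; rewrite ler_sqr ?nnegrE ?(le_trans u0 uv). Qed.

Lemma le_of_sqr_le (R : realDomainType) (u v : R) : 0 <= v -> u ^+ 2 <= v ^+ 2 -> u <= v.
Proof.
move=> v0; have [u0|/ltW u0] := lerP u 0; first by move=> _; apply: le_trans u0 v0.
by rewrite ler_sqr ?nnegrE.
Qed.

Lemma sqr_le_of_le_sqrt (R : rcfType) (u v : R) : 0 <= u -> 0 <= v ->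
  u <= Num.sqrt v -> u ^+ 2 <= v.
Proof. by move=> u0 v0; rewrite -{2}(sqr_sqrtr v0) ler_pXn2r ?nnegrE ?sqrtr_ge0. Qed.

Lemma le_sqr_of_sqrt_le (R : rcfType) (u v : R) : 0 <= v -> Num.sqrt v <= u -> v <= u ^+ 2.
Proof.
move=> v0 vu; rewrite -{1}(sqr_sqrtr v0) ler_pXn2r ?nnegrE ?sqrtr_ge0 //.
exact: le_trans (sqrtr_ge0 v) vu.
Qed.

Lemma sqr_le_triangle (R : realFieldType) (u v z t : R) : 0 < t -> `|u| <= `|v| + `|z| ->
  u ^+ 2 <= (1 + t) * v ^+ 2 + (1 + t^-1) * z ^+ 2.
Proof.
move=> t0 uvz; rewrite -[u ^+ 2]real_normK ?num_real // -[v ^+ 2]real_normK ?num_real //.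
rewrite -[z ^+ 2]real_normK ?num_real //.
have : `|u| ^+ 2 <= (`|v| + `|z|) ^+ 2 by rewrite lerXn2r // ?nnegrE.
(* [2 a b <= t a^2 + b^2 / t] is [0 <= (t a - b)^2 / t]. *)
have : 0 <= t^-1 * (t * `|v| - `|z|) ^+ 2 by rewrite mulr_ge0 ?sqr_ge0 // invr_ge0 ltW.
have -> : t^-1 * (t * `|v| - `|z|) ^+ 2 = t * `|v| ^+ 2 - 2 * `|v| * `|z| + t^-1 * `|z| ^+ 2.
  by field; rewrite gt_eqF.
rewrite sqrrD; lra.
Qed.

Section sqsum.
Variables (R : realType) (T : choiceType).
Implicit Types (x y z : T -> R) (A B S : set T).

Local Open Scope ereal_scope.

Lemma le_esum_subset A B (f : T -> \bar R) : (forall i, 0 <= f i) -> A `<=` B ->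
  \esum_(i in A) f i <= \esum_(i in B) f i.
Proof.
move=> f0 AB; rewrite (esum_mkcond A) (esum_mkcond B); apply: le_esum => i _.
case: ifPn => iA; first by rewrite ifT // inE; apply: AB; rewrite -inE.
by case: ifP.
Qed.

Lemma esum_le_lin S (f g h : T -> R) (a b : R) : (0 <= a)%R -> (0 <= b)%R ->
  (forall i, 0 <= g i)%R -> (forall i, 0 <= h i)%R ->
  (forall i, S i -> f i <= a * g i + b * h i)%R ->
  \esum_(i in S) (f i)%:E <=
    a%:E * (\esum_(i in S) (g i)%:E) + b%:E * (\esum_(i in S) (h i)%:E).
Proof.
move=> a0 b0 g0 h0 fle; apply: ge_ereal_sup => _ [A [finA AS] <-].
apply: (@le_trans _ _ (\sum_(i \in A) ((a * g i + b * h i)%R)%:E)).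
  by apply: lee_fsum => // i /AS /fle; rewrite lee_fin.
rewrite fsumEFin // fsbig_split // -!mulr_fsumr EFinD !EFinM.
by apply: leeD; apply: lee_wpmul2l => //; rewrite -fsumEFin //;
  apply: ereal_sup_ubound; exists A.
Qed.

Local Close Scope ereal_scope.

(* Junk value [fine +oo = 0] when the sum diverges; it is only used for [l2 x]. *)
Definition sqsum x S : R := fine (\esum_(i in S) (x i ^+ 2)%:E).

Lemma norm2E x : norm2 x = Num.sqrt (sqsum x setT). Proof. by []. Qed.

Lemma sqsum_ge0 x S : 0 <= sqsum x S.
Proof. by apply: fine_ge0; apply: esum_ge0 => i _; rewrite lee_fin sqr_ge0. Qed.

Lemma esum_sqr_l2 x S : l2 x -> \esum_(i in S) (x i ^+ 2)%:E = (sqsum x S)%:E.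
Proof.
move=> lx; rewrite /sqsum fineK //; apply/fin_numPlt/andP; split.
  by apply: (@lt_le_trans _ _ 0%E) => //; apply: esum_ge0 => i _; rewrite lee_fin sqr_ge0.
by apply: le_lt_trans lx; apply: le_esum_subset => // i; rewrite lee_fin sqr_ge0.
Qed.

Lemma le_sqsum x A B : l2 x -> A `<=` B -> sqsum x A <= sqsum x B.
Proof.
move=> lx AB; rewrite -lee_fin -!esum_sqr_l2 //.
by apply: le_esum_subset => // i; rewrite lee_fin sqr_ge0.
Qed.

Lemma sqsumID x S B : l2 x -> sqsum x S = sqsum x (S `&` B) + sqsum x (S `&` ~` B).
Proof.
move=> lx; apply/eqP; rewrite -(@eqe R) EFinD -!esum_sqr_l2 //.
by rewrite (esumID B) // => i _; rewrite lee_fin sqr_ge0.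
Qed.

Lemma sqsum_setU_le x A B : l2 x -> sqsum x (A `|` B) <= sqsum x A + sqsum x B.
Proof.
by move=> lx; rewrite (sqsumID _ A lx); apply: lerD; apply: le_sqsum => // i [] [].
Qed.

Lemma sqsum_set1 x i : sqsum x [set i] = x i ^+ 2.
Proof. by rewrite /sqsum esum_set1 // lee_fin sqr_ge0. Qed.

Lemma sqsum_eq0 x S : (forall i, S i -> x i = 0) -> sqsum x S = 0.
Proof. by move=> x0; rewrite /sqsum esum1 // => i /x0 ->; rewrite expr0n. Qed.

Lemma sqsum_set0 x : sqsum x set0 = 0.
Proof. exact: sqsum_eq0. Qed.

Lemma sqsum_le_lin x y z S (a b : R) : l2 y -> l2 z -> 0 <= a -> 0 <= b ->
  (forall i, S i -> x i ^+ 2 <= a * y i ^+ 2 + b * z i ^+ 2) ->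
  sqsum x S <= a * sqsum y S + b * sqsum z S.
Proof.
move=> ly lz a0 b0 xyz.
have := @esum_le_lin S (fun i => x i ^+ 2) (fun i => y i ^+ 2) (fun i => z i ^+ 2)
  a b a0 b0 (fun i => sqr_ge0 _) (fun i => sqr_ge0 _) xyz.
rewrite (esum_sqr_l2 _ ly) (esum_sqr_l2 _ lz) -!EFinM -EFinD /sqsum.
case: (\esum_(i in S) (x i ^+ 2)%:E) => [s| |] //= _.
by rewrite addr_ge0 // mulr_ge0 // sqsum_ge0.
Qed.

Lemma l2_le_lin x y z (a b : R) : l2 y -> l2 z -> 0 <= a -> 0 <= b ->
  (forall i, x i ^+ 2 <= a * y i ^+ 2 + b * z i ^+ 2) -> l2 x.
Proof.
move=> ly lz a0 b0 xyz.
have := @esum_le_lin setT (fun i => x i ^+ 2) (fun i => y i ^+ 2) (fun i => z i ^+ 2)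
  a b a0 b0 (fun i => sqr_ge0 _) (fun i => sqr_ge0 _) (fun i _ => xyz i).
rewrite (esum_sqr_l2 _ ly) (esum_sqr_l2 _ lz) -!EFinM -EFinD => /le_lt_trans; apply.
exact: ltry.
Qed.

Lemma sqsum_tail x (e : R) : l2 x -> 0 < e -> exists s : seq T, sqsum x (~` [set` s]) <= e.
Proof.
move=> lx e0.
have : ((sqsum x setT - e)%:E < \esum_(i in setT) (x i ^+ 2)%:E)%E.
  by rewrite esum_sqr_l2 // lte_fin ltrBlDr ltrDl.
move=> /ereal_sup_gt [_ [A [finA _] <-] lt].
have [s As] := (proj1 (finite_seqP A)) finA.
exists s; rewrite -As.
have := sqsumID setT A lx; rewrite !setTI.
have : ((sqsum x setT - e)%:E < (sqsum x A)%:E)%E.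
  by rewrite -esum_sqr_l2 // esum_fset // => i _; rewrite lee_fin sqr_ge0.
rewrite lte_fin; lra.
Qed.

Lemma sqsum_seq_le x (s : seq T) (b : R) : l2 x -> (forall i, i \in s -> x i ^+ 2 <= b) ->
  sqsum x [set` s] <= (size s)%:R * b.
Proof.
move=> lx; elim: s => [|a s IH] xb; first by rewrite sqsum_eq0 // mul0r.
apply: (@le_trans _ _ (sqsum x ([set a] `|` [set` s]))).
  by apply: le_sqsum => // i /=; rewrite inE => /orP [/eqP ->|]; [left|right].
apply: le_trans (sqsum_setU_le _ _ lx) _.
rewrite sqsum_set1 /= -[(size s).+1]add1n natrD mulrDl mul1r.
apply: lerD; first by apply: xb; rewrite mem_head.
by apply: IH => i si; apply: xb; rewrite inE si orbT.
Qed.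

Lemma sqsum_small_coords x (e : R) : l2 x -> 0 < e ->
  exists k : nat, sqsum x [set i | `|x i| < k.+1%:R^-1] <= e.
Proof.
move=> lx e0; have [s xs] := sqsum_tail lx e0.
have [k xk] : exists k : nat, forall i, i \in s -> x i != 0 -> k.+1%:R^-1 <= `|x i|.
  elim: s {xs} => [|a s [k IH]]; first by exists 0%N.
  have [xa0|xa0] := eqVneq (x a) 0.
    by exists k => i; rewrite inE => /orP [/eqP ->|/IH//]; rewrite xa0 eqxx.
  have [k' xk'] : exists k', 0 + k'.+1%:R^-1 < `|x a|.
    by apply: ltr_add_invr; rewrite normr_gt0.
  have inv_le j : (j <= maxn k k')%N -> (maxn k k').+1%:R^-1 <= j.+1%:R^-1 :> R.
    by move=> jk; rewrite lef_pV2 ?posrE ?ltr0Sn // ler_nat ltnS.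
  exists (maxn k k') => i; rewrite inE => /orP [/eqP -> _|si xi0].
    by rewrite add0r in xk'; apply: le_trans (inv_le _ (leq_maxr _ _)) (ltW xk').
  exact: le_trans (inv_le _ (leq_maxl _ _)) (IH i si xi0).
exists k; rewrite (sqsumID _ [set` s] lx) sqsum_eq0 ?add0r.
  by apply: le_trans xs; apply: le_sqsum => // i [].
move=> i [/= xi si]; apply/eqP; apply: contraTT xi => xi0.
by rewrite -leNgt; apply: xk.
Qed.

Lemma sqsum_triangle x y z S (t : R) : l2 y -> l2 z -> 0 < t ->
  (forall i, S i -> `|x i| <= `|y i| + `|z i|) ->
  sqsum x S <= (1 + t) * sqsum y S + (1 + t^-1) * sqsum z S.
Proof.
move=> ly lz t0 xyz; apply: sqsum_le_lin => //.
- by rewrite addr_ge0 // ltW.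
- by rewrite addr_ge0 // invr_ge0 ltW.
- by move=> i Si; apply: sqr_le_triangle => //; exact: xyz.
Qed.

Lemma l2_sub x y : l2 x -> l2 y -> l2 (x \- y).
Proof.
move=> lx ly; apply: (l2_le_lin (a := 2) (b := 2) lx ly) => // i.
by have := @sqr_le_triangle _ (x i - y i) (x i) (y i) 1 ltr01; rewrite invr1; apply;
  exact: ler_normB.
Qed.

Lemma sqsum_sub_seq_le x y (s : seq T) (rho : R) : l2 x -> l2 y ->
  (forall i, i \in s -> `|x i - y i| < rho) ->
  sqsum (x \- y) [set` s] <= (size s)%:R * rho ^+ 2.
Proof.
move=> lx ly xy; apply: sqsum_seq_le; first exact: l2_sub.
move=> i si; rewrite -real_normK ?num_real //.
exact: sqr_le_sqr (normr_ge0 _) (ltW (xy i si)).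
Qed.

End sqsum.

Section supsqrt.
Variables (R : realType) (T : choiceType).
Implicit Types (F : set (set T)) (h : set T -> R) (x : T -> R).

Definition supsqrt F h : R := sup [set Num.sqrt (h A) | A in F].

Lemma supsqrt_ge F h (b : R) A : (forall A, F A -> h A <= b) -> F A ->
  Num.sqrt (h A) <= supsqrt F h.
Proof.
move=> hb FA; apply: ub_le_sup; last by exists A.
by exists (Num.sqrt b) => _ [A' FA' <-]; rewrite ler_wsqrtr // hb.
Qed.

Lemma supsqrt_le F h (b : R) A : F A -> (forall A, F A -> h A <= b) ->
  supsqrt F h <= Num.sqrt b.
Proof.
move=> FA hb; apply: ge_sup; first by exists (Num.sqrt (h A)), A.
by move=> _ [A' FA' <-]; rewrite ler_wsqrtr // hb.
Qed.

Lemma supsqrt_adherent F h (b : R) A (e : R) : F A -> (forall A, F A -> h A <= b) ->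
  0 < e -> exists2 A, F A & supsqrt F h - e < Num.sqrt (h A).
Proof.
move=> FA hb e0.
have hs : has_sup [set Num.sqrt (h A) | A in F].
  split; first by exists (Num.sqrt (h A)), A.
  by exists (Num.sqrt b) => _ [A' FA' <-]; rewrite ler_wsqrtr // hb.
by have [_ [A' FA' <-] lt] := sup_adherent e0 hs; exists A'.
Qed.

Lemma normA_ge F x A : l2 x -> F A -> Num.sqrt (sqsum x A) <= normA F x.
Proof.
by move=> lx FA; apply: (@supsqrt_ge _ _ (sqsum x setT)) => // B _; apply: le_sqsum.
Qed.

Lemma normA_le F x (b : R) : F set0 -> (forall A, F A -> sqsum x A <= b) ->
  normA F x <= Num.sqrt b.
Proof. exact: supsqrt_le. Qed.

Lemma normA_le_norm2 F x : l2 x -> F set0 -> normA F x <= norm2 x.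
Proof. by move=> lx F0; apply: normA_le => // A _; apply: le_sqsum. Qed.

Lemma normA_ge0 F x : l2 x -> F set0 -> 0 <= normA F x.
Proof. by move=> lx F0; apply: le_trans (normA_ge lx F0); exact: sqrtr_ge0. Qed.

End supsqrt.

Section equilateral_norm.
Variables (R : realType) (T : choiceType) (F : set (set T)).
Hypothesis F0 : F set0.
Variables (w : T -> R) (delta : R).
Hypotheses (lw : l2 w) (w_delta : norm2A F w = delta).

Lemma norm2A_eq_sqsum_ge : delta ^+ 2 / 4 <= sqsum w setT.
Proof.
have A_le := normA_le_norm2 lw F0.
have -> : sqsum w setT = norm2 w ^+ 2 by rewrite norm2E sqr_sqrtr // sqsum_ge0.
have -> : delta ^+ 2 / 4 = (delta / 2) ^+ 2 by field.
have A_ge0 := normA_ge0 lw F0.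
by rewrite ler_pXn2r ?nnegrE //; move: w_delta; rewrite /norm2A; lra.
Qed.

Lemma norm2A_eq_sqsum_le : sqsum w setT <= delta ^+ 2.
Proof.
have A_ge0 := normA_ge0 lw F0.
rewrite -[sqsum _ _]sqr_sqrtr ?sqsum_ge0 // -norm2E ler_pXn2r ?nnegrE ?sqrtr_ge0 //.
  by move: w_delta; rewrite /norm2A; lra.
by move: w_delta; rewrite /norm2A norm2E; have := sqrtr_ge0 (sqsum w setT); lra.
Qed.

End equilateral_norm.

Section T0_family.
Variables (d : Order.disp_t) (W : orderType d) (I J : Type) (i0 : I) (c : W -> W -> I * J).
Implicit Types (a P Q : set W).

Lemma T0_family0 : T0_family i0 c set0.
Proof. by split => // x y []. Qed.

Lemma T0_family1 i : T0_family i0 c [set i].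
Proof. by split; [exact: finite_set1 | move=> x y -> ->]. Qed.

Lemma pcolC (K : Type) (f : W -> W -> K) p q : p <> q -> pcol f p q = pcol f q p.
Proof. by move=> pq; rewrite /pcol; case: (ltgtP p q). Qed.

Lemma T0_family_setU_cross a1 a2 P Q :
  (forall p q, P p -> Q q -> (pcol c p q).1 = i0) ->
  T0_family i0 c a1 -> T0_family i0 c a2 -> T0_family i0 c ((a1 `&` P) `|` (a2 `&` Q)).
Proof.
move=> PQ [fin1 a1c] [fin2 a2c]; split.
  by rewrite finite_setU; split; apply: finite_setIl.
move=> p q [[p1 Pp]|[p2 Qp]] [[q1 Pq]|[q2 Qq]] pq.
- exact: a1c.
- exact: PQ.
- by rewrite pcolC //; apply: PQ.
- exact: a2c.
Qed.

Lemma T0_family_cross_disjoint a P Q : P `&` Q = set0 ->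
  (forall p q, P p -> Q q -> (pcol c p q).1 <> i0) ->
  T0_family i0 c a -> a `&` P = set0 \/ a `&` Q = set0.
Proof.
move=> PQ0 PQ [_ ac].
have [|/eqP/set0P [p [ap Pp]]] := pselect (a `&` P = set0); first by left.
right; apply/seteqP; split => // q [aq Qq].
apply: (PQ p q Pp Qq); apply: ac => // pq.
by rewrite -[False]/(set0 p) -PQ0; split => //; rewrite pq.
Qed.

Lemma c0_image_set1 (A B : set W) (j : I) :
  c0_image c A B = [set j] -> forall p q, A p -> B q -> (pcol c p q).1 = j.
Proof.
move=> ABj p q Ap Bq.
have : c0_image c A B (pcol c p q).1 by exists p => //; exists q.
by rewrite ABj.
Qed.

End T0_family.

Section pair.
Variables (R : realType) (T : choiceType) (x y : T -> R) (Sx Sy D : set T) (t e eD : R).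
Hypotheses (lx : l2 x) (ly : l2 y) (t_gt0 : 0 < t).
Hypotheses (x_tail : sqsum x (~` Sx) <= e) (y_tail : sqsum y (~` Sy) <= e).
Hypotheses (SxSy : Sx `&` Sy = D) (root_le : sqsum (x \- y) D <= eD).

Let w := x \- y.
Let lw : l2 w. Proof. exact: l2_sub. Qed.
Let E := (1 + t^-1) * e.
Let x_tail_le A : A `<=` ~` Sx -> sqsum x A <= e.
Proof. by move=> ASx; apply: le_trans x_tail; apply: le_sqsum. Qed.

Let y_tail_le A : A `<=` ~` Sy -> sqsum y A <= e.
Proof. by move=> ASy; apply: le_trans y_tail; apply: le_sqsum. Qed.

Let private_x : Sx `&` ~` Sy = Sx `\` D.
Proof.
rewrite -SxSy; apply/seteqP; split => i /=; first by move=> [Sxi nSyi]; split => // -[].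
by move=> [Sxi nD]; split => // Syi; apply: nD.
Qed.

Let private_y : ~` Sx `&` Sy = Sy `\` D.
Proof.
rewrite -SxSy; apply/seteqP; split => i /=; first by move=> [nSxi Syi]; split => // -[].
by move=> [Syi nD]; split => // Sxi; apply: nD.
Qed.

Let tV_ge0 : 0 <= 1 + t^-1. Proof. by rewrite addr_ge0 // invr_ge0 ltW. Qed.

Let w_private_x A : A `<=` Sx `\` D -> sqsum w A <= (1 + t) * sqsum x A + E.
Proof.
move=> AP; apply: le_trans (sqsum_triangle lx ly t_gt0 (fun i _ => ler_normB _ _)) _.
rewrite lerD2l ler_wpM2l ?y_tail_le // => i /AP.
by rewrite -private_x => -[].
Qed.

Let w_private_y A : A `<=` Sy `\` D -> sqsum w A <= (1 + t) * sqsum y A + E.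
Proof.
move=> AP; have yx i : `|w i| <= `|y i| + `|x i| by rewrite addrC ler_normB.
apply: le_trans (sqsum_triangle ly lx t_gt0 (fun i _ => yx i)) _.
rewrite lerD2l ler_wpM2l ?x_tail_le // => i /AP.
by rewrite -private_y => -[].
Qed.

Let x_private A : A `<=` Sx `\` D -> sqsum x A <= (1 + t) * sqsum w A + E.
Proof.
move=> AP; have xwy i : `|x i| <= `|w i| + `|y i|.
  by have := ler_normD (w i) (y i); rewrite /w /= subrK.
apply: le_trans (sqsum_triangle lw ly t_gt0 (fun i _ => xwy i)) _.
rewrite lerD2l ler_wpM2l ?y_tail_le // => i /AP.
by rewrite -private_x => -[].
Qed.

Let y_private A : A `<=` Sy `\` D -> sqsum y A <= (1 + t) * sqsum w A + E.
Proof.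
move=> AP; have ywx i : `|y i| <= `|w i| + `|x i|.
  by have := ler_normB (x i) (w i); rewrite /w /= opprB addrC subrK addrC.
apply: le_trans (sqsum_triangle lw lx t_gt0 (fun i _ => ywx i)) _.
rewrite lerD2l ler_wpM2l ?x_tail_le // => i /AP.
by rewrite -private_y => -[].
Qed.

Let w_outside A : sqsum w (A `&` ~` Sx `&` ~` Sy) <= 4 * e.
Proof.
have := sqsum_triangle (S := A `&` ~` Sx `&` ~` Sy) lx ly ltr01
  (fun i _ => ler_normB (x i) (y i)).
rewrite invr1.
have : sqsum x (A `&` ~` Sx `&` ~` Sy) <= e by apply: x_tail_le => i [[]].
have : sqsum y (A `&` ~` Sx `&` ~` Sy) <= e by apply: y_tail_le => i [].
lra.
Qed.

Lemma pair_sqsum_le A :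
  sqsum w A <= eD + (1 + t) * (sqsum x (A `&` (Sx `\` D)) + sqsum y (A `&` (Sy `\` D)))
               + 2 * E + 4 * e.
Proof.
rewrite (sqsumID A Sx lw) (sqsumID (A `&` Sx) Sy lw) (sqsumID (A `&` ~` Sx) Sy lw).
have h1 : sqsum w (A `&` Sx `&` Sy) <= eD.
  by apply: le_trans root_le; apply: le_sqsum => // i [[_ ?] ?]; rewrite -SxSy.
have h2 : sqsum w (A `&` Sx `&` ~` Sy) <= (1 + t) * sqsum x (A `&` (Sx `\` D)) + E.
  by rewrite -setIA private_x; apply: w_private_x => i [].
have h3 : sqsum w (A `&` ~` Sx `&` Sy) <= (1 + t) * sqsum y (A `&` (Sy `\` D)) + E.
  by rewrite -setIA private_y; apply: w_private_y => i [].
have := w_outside A; lra.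
Qed.

Lemma pair_private_le A B : A `<=` Sx `\` D -> B `<=` Sy `\` D ->
  sqsum x A + sqsum y B <= (1 + t) * sqsum w (A `|` B) + 2 * E.
Proof.
move=> AP BP; rewrite (sqsumID _ Sx lw).
have -> : (A `|` B) `&` Sx = A.
  apply/seteqP; split => [i [[//|/BP[Syi nDi]] Sxi]|i Ai].
    by case: nDi; rewrite -SxSy.
  by split; [left|case: (AP i Ai)].
have -> : (A `|` B) `&` ~` Sx = B.
  apply/seteqP; split => [i [[/AP[Sxi _]|//] nSxi]//|i Bi]; split; first by right.
  by move=> Sxi; have [Syi []] := BP i Bi; rewrite -SxSy.
have := x_private AP; have := y_private BP; lra.
Qed.

End pair.

Section stabilize.
Variables (R : realType) (T : Type).

Lemma floor_mulr_bounds (a rho : R) : 0 < rho ->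
  (Num.floor (a / rho))%:~R * rho <= a < (Num.floor (a / rho))%:~R * rho + rho.
Proof.
move=> rho0; have /andP [lo hi] := mem_rg1_floor (a / rho).
by rewrite -ler_pdivlMr // lo /= -[X in _ < _ + X]mul1r -mulrDl -ltr_pdivrMr.
Qed.

Lemma not_countable_level (U : set T) (f : T -> R) (rho : R) : ~ countable U -> 0 < rho ->
  exists a, ~ countable (U `&` [set z | a <= f z < a + rho]).
Proof.
move=> cU rho0; have [k cUk] := not_countable_fiber (fun z => Num.floor (f z / rho)) cU.
exists (k%:~R * rho); apply: contra_not cUk; apply: sub_countable; apply: subset_card_le.
by move=> z [Uz /= <-]; split => //; apply: floor_mulr_bounds.
Qed.

Lemma not_countable_close (K : eqType) (U : set (K -> R)) (s : seq K) (rho : R) :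
  ~ countable U -> 0 < rho ->
  exists2 U', U' `<=` U /\ ~ countable U' &
    forall x y, U' x -> U' y -> forall i, i \in s -> `|x i - y i| < rho.
Proof.
move=> cU rho0.
have [k cUk] := not_countable_fiber (fun z => [seq Num.floor (z i / rho) | i <- s]) cU.
exists (U `&` [set z | [seq Num.floor (z i / rho) | i <- s] = k]); first by split => // z [].
move=> x y [_ /= xk] [_ /= yk] i si; rewrite -{yk}xk in yk.
have /eq_in_map/(_ i si) /= xy := yk.
have := floor_mulr_bounds (x i) rho0; have := floor_mulr_bounds (y i) rho0.
by rewrite xy ltr_norml => /andP [? ?] /andP [? ?]; apply/andP; split; lra.
Qed.

End stabilize.

Lemma l2_support_delta_system (R : realType) (d : Order.disp_t) (W : orderType d)
    (T : choiceType) (U : set (T -> R)) (e : R) :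
  is_omega1 W -> U `<=` @l2 R T -> ~ countable U -> 0 < e ->
  exists (S : (T -> R) -> set T) (D : set T), exists2 U', U' `<=` U /\ ~ countable U' &
    [/\ forall z, finite_set (S z), forall z, U' z -> sqsum z (~` S z) <= e
      & forall x y, U' x -> U' y -> x <> y -> S x `&` S y = D].
Proof.
move=> W_omega1 U_l2 cU e0.
have tail z : exists s : seq T, l2 z -> sqsum z (~` [set` s]) <= e.
  by have [/sqsum_tail/(_ e0) [s zs]|] := pselect (l2 z); [exists s | exists [::]].
pose s z := proj1_sig (cid (tail z)).
have [D [U' [U'U cU'] root]] := delta_system W_omega1 s cU.
exists (fun z => [set` s z]), D, U' => //; split => [z|z /U'U /U_l2|//].
  exact: finite_seq.
exact: (proj2_sig (cid (tail z))).
Qed.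

(* Tolerances of the thinning-out: [eta] bounds the error terms and [t] is the
   parameter in [(a + b)^2 <= (1 + t) a^2 + (1 + 1/t) b^2]. *)
Definition error_budget (R : realFieldType) (m delta B eta t : R) : Prop :=
  [/\ 0 < eta, eta <= m / 1000, eta <= m ^+ 2 / 1000, eta <= delta ^+ 2 / 1000
    & eta <= m * delta / 1000] /\
  [/\ 0 < t, t <= 1 / 1000, t * B <= m * delta / 1000 & (1 + t^-1) * (t * eta) <= 2 * eta].

(* [eta = r^2 / 1000] and [t = r / (1000 (B + 1))], where
   [r = m delta / ((1 + m)(1 + delta))] is below [1], [m], [delta] and [m delta]. *)
Lemma error_budget_exists (R : realFieldType) (m delta B : R) :
  0 < m -> 0 < delta -> 0 <= B -> exists eta t, error_budget m delta B eta t.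
Proof.
move=> m0 d0 B0; pose r := m * delta / ((1 + m) * (1 + delta)).
have k0 : 0 < 1000 :> R by rewrite ltr0n.
have k0' : 0 < 1000^-1 :> R by rewrite invr_gt0.
have mdd : 0 < (1 + m) * (1 + delta) by rewrite mulr_gt0 ?addr_gt0.
have [m1 d1] : m <= 1 + m /\ delta <= 1 + delta by rewrite !lerDr.
have [m1' d1'] : 1 <= 1 + m /\ 1 <= 1 + delta by rewrite !lerDl !ltW.
have r0 : 0 < r by rewrite divr_gt0 // mulr_gt0.
have [rmd rm rd r1] : [/\ r <= m * delta, r <= m, r <= delta & r <= 1].
  split; rewrite ler_pdivrMr //.
  - by rewrite ler_peMr ?mulr_ege1 // ltW // mulr_gt0.
  - by rewrite ler_pM2l // (le_trans d1) // ler_peMl // ltW // addr_gt0.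
  - by rewrite [m * _]mulrC ler_pM2l // (le_trans m1) // ler_peMr // ltW // addr_gt0.
  - by rewrite mul1r ler_pM // ltW.
have r2 : r ^+ 2 <= r by rewrite expr2 ger_pMr.
have r2m : r ^+ 2 <= m ^+ 2 by rewrite ler_pXn2r ?nnegrE ?(ltW r0) ?(ltW m0).
have r2d : r ^+ 2 <= delta ^+ 2 by rewrite ler_pXn2r ?nnegrE ?(ltW r0) ?(ltW d0).
pose eta := r ^+ 2 / 1000; pose t := r / (1000 * (B + 1)).
have eta0 : 0 < eta by rewrite (divr_gt0 _ k0) ?exprn_gt0.
have B1 : 0 < 1000 * (B + 1) := mulr_gt0 k0 (ltr_wpDl B0 ltr01).
have t0 : 0 < t by exact: divr_gt0 r0 B1.
have tB : t * (1000 * (B + 1)) = r by rewrite (divfK (lt0r_neq0 B1)).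
have tB' : t * B = r / 1000 - t by rewrite -tB; field.
have t1 : t <= 1 / 1000.
  have : t * 1000 <= t * (1000 * (B + 1)) by rewrite (ler_pM2l t0); lra.
  by rewrite tB; lra.
have te : t * eta <= eta by rewrite ger_pMl //; lra.
have tE : (1 + t^-1) * (t * eta) = t * eta + eta by field; rewrite gt_eqF.
exists eta, t; split; split.
- exact: eta0.
- by rewrite (ler_pM2r k0'); lra.
- by rewrite (ler_pM2r k0').
- by rewrite (ler_pM2r k0').
- by rewrite (ler_pM2r k0'); lra.
- exact: t0.
- exact: t1.
- by rewrite tB'; rewrite -(ler_pM2r k0') in rmd; lra.
- by rewrite tE; lra.
Qed.

Lemma tolerance_exists (R : realFieldType) (eta : R) (n : nat) : 0 < eta -> eta <= 1 ->
  exists rho, [/\ 0 < rho, rho <= eta & n%:R * rho ^+ 2 <= eta].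
Proof.
move=> eta0 eta1; have n1 : 0 < n%:R + 1 :> R by rewrite ltr_wpDl ?ler0n.
exists (eta / (n%:R + 1)); have rho0 : 0 < eta / (n%:R + 1) by rewrite divr_gt0.
have nr : (n%:R + 1) * (eta / (n%:R + 1)) = eta by rewrite mulrC divfK // gt_eqF.
have rho_le : eta / (n%:R + 1) <= eta.
  by rewrite ler_pdivrMr //; apply: ler_peMr; [exact: ltW | rewrite lerDr ler0n].
split => //; rewrite expr2 mulrA.
have : n%:R * (eta / (n%:R + 1)) <= eta.
  by rewrite -{2}nr; apply: ler_wpM2r; [exact: ltW | rewrite lerDl].
move=> /(ler_wpM2r (ltW rho0)) /le_trans; apply.
by apply: ler_piMr; [exact: ltW | exact: le_trans rho_le eta1].
Qed.

Section strong_T0_family.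
Variables (R : realType) (d : Order.disp_t) (W : orderType d) (I J : Type).
Variables (i0 i1 : I) (c : W -> W -> I * J).
Hypotheses (W_omega1 : is_omega1 W) (i01 : i0 <> i1) (c_strong : strong_T_coloring i0 i1 c).

Local Notation F := (T0_family i0 c).

Section refined_family.
Variables (delta m B eta t : R).
Hypotheses (delta_gt0 : 0 < delta) (m_gt0 : 0 < m) (budget : error_budget m delta B eta t).

Variables (U : set (W -> R)) (S : (W -> R) -> set W) (D : set W) (rho Tc gc : R).

Let P z := S z `\` D.
Let G z := supsqrt F (fun a => sqsum z (a `&` P z)).

Hypotheses (U_uncountable : ~ countable U) (U_l2 : U `<=` @l2 R W).
Hypothesis U_equilateral :
  forall x y, U x -> U y -> x <> y -> norm2A F (x \- y) = delta.
Hypothesis U_bounded : forall z, U z -> sqsum z setT <= B.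
Hypothesis U_small : forall z, U z -> sqsum z [set i | `|z i| < m] <= delta ^+ 2 / 64.
Hypothesis S_finite : forall z, finite_set (S z).
Hypothesis S_tail : forall z, U z -> sqsum z (~` S z) <= t * eta.
Hypothesis S_root : forall x y, U x -> U y -> x <> y -> S x `&` S y = D.
Hypothesis root_close : forall x y, U x -> U y -> sqsum (x \- y) D <= eta.
Hypotheses (rho_gt0 : 0 < rho) (rho_le : rho <= eta).
Hypothesis Tc_near : forall z, U z -> Tc <= sqsum z (P z) < Tc + rho.
Hypothesis gc_near : forall z, U z -> gc <= G z < gc + rho.

Let t_gt0 : 0 < t. Proof. by case: budget => _ []. Qed.

Let e_le : t * eta <= eta /\ (1 + t^-1) * (t * eta) <= 2 * eta.
Proof.
have [[eta0 _ _ _ _] [_ t1 _ E2]] := budget.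
by split => //; rewrite ger_pMl //; lra.
Qed.

Let l2_sub_U x y : U x -> U y -> l2 (x \- y).
Proof. by move=> /U_l2 lx /U_l2 ly; apply: l2_sub. Qed.

Let private_disjoint x y : U x -> U y -> x <> y -> P x `&` P y = set0.
Proof.
move=> Ux Uy xy; apply/seteqP; split => // i [[Sxi nDi] [Syi _]]; apply: nDi.
by rewrite -(S_root Ux Uy xy).
Qed.

Let sqsum_pair_bounds x y : U x -> U y -> x <> y ->
  2 * Tc - 4 * eta <= (1 + t) * sqsum (x \- y) setT /\
  sqsum (x \- y) setT <= (1 + t) * (2 * Tc + 2 * rho) + 9 * eta.
Proof.
move=> Ux Uy xy.
have [/andP [Tx Tx'] /andP [Ty Ty']] := (Tc_near Ux, Tc_near Uy).
have [e1 E2] := e_le; have t1 : 0 <= 1 + t by rewrite addr_ge0 // ltW.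
split.
  have := pair_private_le (U_l2 Ux) (U_l2 Uy) t_gt0 (S_tail Ux) (S_tail Uy)
    (S_root Ux Uy xy) (@subset_refl _ (P x)) (@subset_refl _ (P y)).
  have : (1 + t) * sqsum (x \- y) (P x `|` P y) <= (1 + t) * sqsum (x \- y) setT.
    by rewrite ler_wpM2l //; apply: le_sqsum (l2_sub_U Ux Uy) (@subsetT _ _).
  lra.
have := pair_sqsum_le (U_l2 Ux) (U_l2 Uy) t_gt0 (S_tail Ux) (S_tail Uy)
  (S_root Ux Uy xy) (root_close Ux Uy) setT.
rewrite !setTI.
have : (1 + t) * (sqsum x (P x) + sqsum y (P y)) <= (1 + t) * (2 * Tc + 2 * rho).
  by rewrite ler_wpM2l //; lra.
rewrite -/(P x) -/(P y); lra.
Qed.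

Let Tc_gt : delta ^+ 2 / 64 < Tc.
Proof.
have [x [y [Ux Uy xy]]] := not_countable_two U_uncountable.
have Q_ge := norm2A_eq_sqsum_ge (T0_family0 i0 c) (l2_sub_U Ux Uy) (U_equilateral Ux Uy xy).
have [_ Q_le] := sqsum_pair_bounds Ux Uy xy.
have [[eta0 _ _ etad _] [_ t1 _ _]] := budget.
have d2 : 0 < delta ^+ 2 by rewrite exprn_gt0.
have rl := rho_le; rewrite ltNge; apply/negP => Tc_le.
have XY : 2 * Tc + 2 * rho <= delta ^+ 2 / 32 + 2 * eta by lra.
have Y0 : 0 <= delta ^+ 2 / 32 + 2 * eta by lra.
have := ler_wpM2l (ltW t_gt0) XY; have := ler_wpM2r Y0 t1.
lra.
Qed.

Let private_large z : U z -> exists2 i, P z i & m <= `|z i|.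
Proof.
move=> Uz; have [//|nbig] := pselect (exists2 i, P z i & m <= `|z i|); exfalso.
have small : P z `<=` [set i | `|z i| < m].
  by move=> i Pi /=; rewrite ltNge; apply/negP => mi; apply: nbig; exists i.
have /andP [Tz _] := Tc_near Uz.
have := le_sqsum (U_l2 Uz) small; have := U_small Uz; have := Tc_gt.
lra.
Qed.

Let G_bound z : U z -> forall a, F a -> sqsum z (a `&` P z) <= sqsum z setT.
Proof. by move=> Uz a _; apply: le_sqsum (U_l2 Uz) _. Qed.

Let m_le_G z : U z -> m <= G z.
Proof.
move=> Uz; have [i Pi mi] := private_large Uz; apply: le_trans mi _.
have := supsqrt_ge (G_bound Uz) (T0_family1 i0 c i).
have -> : [set i] `&` P z = [set i] by apply/seteqP; split => j /=; [case | move=> ->].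
by rewrite sqsum_set1 sqrtr_sqr.
Qed.

Let gc_facts : [/\ 0 < gc, rho <= gc / 999, eta <= gc ^+ 2 / 998 & m <= 1000 / 999 * gc].
Proof.
have [x Ux] := not_countable_nonempty U_uncountable.
have [_ G_lt] := andP (gc_near Ux); have mG := m_le_G Ux.
have [[_ etam etam2 _ _] _] := budget.
have [rl m0] := (rho_le, m_gt0).
have mg : m <= 1000 / 999 * gc by lra.
have g0 : 0 < gc by lra.
have mg0 : 0 <= 1000 / 999 * gc := le_trans (ltW m0) mg.
have m2 : m ^+ 2 <= (1000 / 999 * gc) ^+ 2 by rewrite ler_pXn2r ?nnegrE ?(ltW m0) ?mg0.
have sq : (1000 / 999 * gc) ^+ 2 = 1000 / 999 * (1000 / 999) * gc ^+ 2.
  by rewrite exprMn expr2.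
rewrite sq in m2; have g2 := sqr_ge0 gc.
split; [exact: g0 | lra | lra | exact: mg].
Qed.

Let norm2_ge x y : U x -> U y -> x <> y -> delta / 2 <= norm2 (x \- y).
Proof.
move=> Ux Uy xy; have := U_equilateral Ux Uy xy; rewrite /norm2A.
by have := normA_le_norm2 (l2_sub_U Ux Uy) (T0_family0 i0 c); lra.
Qed.

(* The difference is at most [4 t B + 2 (1 + t) rho + 13 eta <= 19.002 m delta / 1000]. *)
Let sqsum_pairs_close x y x' y' : U x -> U y -> x <> y -> U x' -> U y' -> x' <> y' ->
  sqsum (x' \- y') setT - sqsum (x \- y) setT <= gc * delta / 50.
Proof.
move=> Ux Uy xy Ux' Uy' xy'.
have [Q0_ge _] := sqsum_pair_bounds Ux Uy xy.
have [_ Q1_le] := sqsum_pair_bounds Ux' Uy' xy'.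
have [[eta0 _ _ _ etamd] [t0 t1 tB _]] := budget.
have [g0 _ _ mg] := gc_facts.
have [[rl r0] d0] := (rho_le, rho_gt0, delta_gt0).
have /andP [Tx _] := Tc_near Ux.
have TcB : Tc <= B.
  by apply: le_trans Tx (le_trans (le_sqsum (U_l2 Ux) (@subsetT _ _)) (U_bounded Ux)).
have Q0 := sqsum_ge0 (x \- y) setT.
have tTc : t * Tc <= t * B by rewrite ler_wpM2l // ltW.
have trho : t * rho <= 1 / 1000 * rho by rewrite ler_wpM2r // ltW.
have tt : 0 <= t * t * sqsum (x \- y) setT by rewrite !mulr_ge0 // ltW.
have lo : (2 * Tc - 4 * eta) * (1 - t) <= (1 + t) * sqsum (x \- y) setT * (1 - t).
  by rewrite ler_wpM2r //; lra.
have md : m * delta <= 1000 / 999 * gc * delta by rewrite ler_wpM2r // ltW.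
have te : 0 <= t * eta by rewrite mulr_ge0 // ltW.
have gd : 0 <= gc * delta by rewrite mulr_ge0 // ltW.
lra.
Qed.

Let norm2_pairs_close x y x' y' : U x -> U y -> x <> y -> U x' -> U y' -> x' <> y' ->
  norm2 (x' \- y') - norm2 (x \- y) <= gc / 50.
Proof.
move=> Ux Uy xy Ux' Uy' xy'.
have Q := sqsum_pairs_close Ux Uy xy Ux' Uy' xy'.
have [L0 L1] := (norm2_ge Ux Uy xy, norm2_ge Ux' Uy' xy').
have [g0 _ _ _] := gc_facts; have d0 := delta_gt0.
have [L10|L01] := lerP (norm2 (x' \- y')) (norm2 (x \- y)); first lra.
have sqE w : sqsum w setT = norm2 w ^+ 2 by rewrite norm2E sqr_sqrtr // sqsum_ge0.
rewrite !sqE in Q.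
have : delta * (norm2 (x' \- y') - norm2 (x \- y)) <=
       (norm2 (x' \- y') + norm2 (x \- y)) * (norm2 (x' \- y') - norm2 (x \- y)).
  by rewrite ler_wpM2r //; lra.
move=> le.
have : delta * (norm2 (x' \- y') - norm2 (x \- y)) <= delta * (gc / 50) by lra.
by rewrite ler_pM2l.
Qed.

(* [1.35^2 < (2 (998/999)^2 - 4/998) / 1.001] *)
Let normA_lower A : 0 <= A -> 2 * (gc - rho) ^+ 2 - 4 * eta <= (1 + t) * A ^+ 2 ->
  135 / 100 * gc <= A.
Proof.
move=> A0 hA; have [g0 rg eg _] := gc_facts; have [_ [_ t1 _ _]] := budget.
have [rl r0] := (rho_le, rho_gt0).
have gr : (998 / 999 * gc) ^+ 2 <= (gc - rho) ^+ 2 by apply: sqr_le_sqr; lra.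
rewrite exprMn [(998 / 999) ^+ 2]expr2 in gr.
have tA := ler_wpM2r (sqr_ge0 A) t1.
have g2 := sqr_ge0 gc.
by apply: le_of_sqr_le A0 _; rewrite exprMn [(135 / 100) ^+ 2]expr2; lra.
Qed.

(* [1.001 (1000/999)^2 + 9/998 < 1.05^2] *)
Let normA_upper A : 0 <= A -> A ^+ 2 <= (1 + t) * (gc + rho) ^+ 2 + 9 * eta ->
  A <= 105 / 100 * gc.
Proof.
move=> A0 hA; have [g0 rg eg _] := gc_facts; have [_ [_ t1 _ _]] := budget.
have [rl r0] := (rho_le, rho_gt0).
have gr : (gc + rho) ^+ 2 <= (1000 / 999 * gc) ^+ 2 by apply: sqr_le_sqr; lra.
rewrite exprMn [(1000 / 999) ^+ 2]expr2 in gr.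
have tg := ler_wpM2r (sqr_ge0 (gc + rho)) t1.
have g2 := sqr_ge0 gc.
have g105 : 0 <= 105 / 100 * gc by lra.
by apply: le_of_sqr_le g105 _; rewrite exprMn [(105 / 100) ^+ 2]expr2; lra.
Qed.

Let normA_colour0 x y : U x -> U y -> x <> y ->
  (forall p q, P x p -> P y q -> (pcol c p q).1 = i0) -> 135 / 100 * gc <= normA F (x \- y).
Proof.
move=> Ux Uy xy col.
have [g0 rg _ _] := gc_facts; have [rl r0] := (rho_le, rho_gt0).
have grho : 0 <= gc - rho by lra.
have heavy z : U z -> exists2 a, F a & (gc - rho) ^+ 2 <= sqsum z (a `&` P z).
  move=> Uz; have [a Fa lt] := supsqrt_adherent (T0_family0 i0 c) (G_bound Uz) rho_gt0.
  exists a => //; have /andP [Gz _] := gc_near Uz; rewrite -/(G z) in lt.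
  by apply: sqr_le_of_le_sqrt grho (sqsum_ge0 _ _) _; lra.
have [a1 Fa1 h1] := heavy x Ux; have [a2 Fa2 h2] := heavy y Uy.
have lo := pair_private_le (U_l2 Ux) (U_l2 Uy) t_gt0 (S_tail Ux) (S_tail Uy)
  (S_root Ux Uy xy) (@subIsetr _ a1 (P x)) (@subIsetr _ a2 (P y)).
have lw := l2_sub_U Ux Uy.
have A0 := normA_ge0 lw (T0_family0 i0 c).
have Ab := le_sqr_of_sqrt_le (sqsum_ge0 _ _)
  (normA_ge lw (T0_family_setU_cross col Fa1 Fa2)).
have [_ E2] := e_le; have t1 : 0 <= 1 + t by rewrite addr_ge0 // ltW.
apply: (normA_lower A0); have := ler_wpM2l t1 Ab; lra.
Qed.

Let normA_colour1 x y : U x -> U y -> x <> y ->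
  (forall p q, P x p -> P y q -> (pcol c p q).1 <> i0) -> normA F (x \- y) <= 105 / 100 * gc.
Proof.
move=> Ux Uy xy col.
have light z a : U z -> F a -> sqsum z (a `&` P z) <= (gc + rho) ^+ 2.
  move=> Uz Fa; have /andP [_ Glt] := gc_near Uz.
  apply: le_sqr_of_sqrt_le (sqsum_ge0 _ _) _.
  by apply: le_trans (supsqrt_ge (G_bound Uz) Fa) _; rewrite -/(G z) ltW.
have [e1 E2] := e_le; have t1 : 0 <= 1 + t by rewrite addr_ge0 // ltW.
have bound a : F a -> sqsum (x \- y) a <= (1 + t) * (gc + rho) ^+ 2 + 9 * eta.
  move=> Fa; have := pair_sqsum_le (U_l2 Ux) (U_l2 Uy) t_gt0 (S_tail Ux) (S_tail Uy)
    (S_root Ux Uy xy) (root_close Ux Uy) a.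
  have := ler_wpM2l t1 (light x a Ux Fa); have := ler_wpM2l t1 (light y a Uy Fa).
  by case: (T0_family_cross_disjoint (private_disjoint Ux Uy xy) col Fa) => ->;
    rewrite sqsum_set0; lra.
have lw := l2_sub_U Ux Uy.
have A0 := normA_ge0 lw (T0_family0 i0 c).
apply: (normA_upper A0); apply: (sqr_le_of_le_sqrt A0) (normA_le (T0_family0 i0 c) bound).
exact: le_trans (sqsum_ge0 _ _) (bound _ (T0_family0 i0 c)).
Qed.

Lemma refined_family_false : False.
Proof.
have [g [Ug g_inj _]] := omega1_free_sequence W_omega1 (N := fun _ => set0)
  U_uncountable (fun _ => countable0 _).
have g_neq a b : (a < b)%O -> g a <> g b by move=> ab /g_inj eab; move: ab; rewrite eab ltxx.
have nonempty a : P (g a) !=set0 by have [i Pi _] := private_large (Ug a); exists i.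
have [[a [b [ab colour0]]] [a' [b' [ab' colour1]]]] := c_strong.2 (fun a => P (g a))
  (fun a => finite_setD _ (S_finite (g a))) nonempty
  (fun a b ab => private_disjoint (Ug a) (Ug b) (fun e => ab (g_inj _ _ e))).
have not_i0 p q : P (g a') p -> P (g b') q -> (pcol c p q).1 <> i0.
  by move=> Pp Pq; rewrite (c0_image_set1 colour1 Pp Pq); exact: nesym.
have := U_equilateral (Ug a) (Ug b) (g_neq _ _ ab).
have := U_equilateral (Ug a') (Ug b') (g_neq _ _ ab').
have := normA_colour0 (Ug a) (Ug b) (g_neq _ _ ab) (c0_image_set1 colour0).
have := normA_colour1 (Ug a') (Ug b') (g_neq _ _ ab') not_i0.
have := norm2_pairs_close (Ug a) (Ug b) (g_neq _ _ ab) (Ug a') (Ug b') (g_neq _ _ ab').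
have [g0 _ _ _] := gc_facts.
rewrite /norm2A; lra.
Qed.

End refined_family.

Section equilateral.
Variables (Y : set (W -> R)) (delta : R).
Hypotheses (Y_l2 : Y `<=` @l2 R W) (Y_uncountable : ~ countable Y) (delta_gt0 : 0 < delta).
Hypothesis Y_equilateral :
  forall y y', Y y -> Y y' -> y <> y' -> norm2A F (y \- y') = delta.

Let equilateral_bounded : exists2 B, 0 <= B & forall y, Y y -> sqsum y setT <= B.
Proof.
have [y0 Yy0] := not_countable_nonempty Y_uncountable.
have [s0 d2] := (sqsum_ge0 y0 setT, sqr_ge0 delta).
exists (2 * sqsum y0 setT + 2 * delta ^+ 2) => [|y Yy]; first lra.
have [->|yy0] := pselect (y = y0); first lra.
have ly0 := Y_l2 Yy0; have lw := l2_sub (Y_l2 Yy) ly0.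
have := norm2A_eq_sqsum_le (T0_family0 i0 c) lw (Y_equilateral Yy Yy0 yy0).
have tri i : `|y i| <= `|(y \- y0) i| + `|y0 i|.
  by have := ler_normD (y i - y0 i) (y0 i); rewrite subrK.
have := sqsum_triangle (S := setT) lw ly0 ltr01 (fun i _ => tri i).
rewrite invr1; lra.
Qed.

Let equilateral_small_coords : exists2 k : nat, setT k &
  ~ countable (Y `&` [set y | sqsum y [set i | `|y i| < k.+1%:R^-1] <= delta ^+ 2 / 64]).
Proof.
have theta_gt0 : 0 < delta ^+ 2 / 64 by rewrite divr_gt0 ?exprn_gt0 ?ltr0n.
apply: not_countable_bigcup (countableP [set: nat]) Y_uncountable _ => y Yy.
by have [k yk] := sqsum_small_coords (Y_l2 Yy) theta_gt0; exists k.
Qed.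

Lemma equilateral_false : False.
Proof.
have [B B_ge0 Y_bounded] := equilateral_bounded.
have [k _ Y1_unc] := equilateral_small_coords.
pose m : R := k.+1%:R^-1.
have m_gt0 : 0 < m by rewrite invr_gt0 ltr0Sn.
have m_le1 : m <= 1 by rewrite invf_le1 ?ltr0Sn // ler1n.
have [eta [t budget]] := error_budget_exists m_gt0 delta_gt0 B_ge0.
have [[eta_gt0 eta_le _ _ _] [t_gt0 _ _ _]] := budget.
set Y1 := Y `&` _ in Y1_unc; have Y1_l2 : Y1 `<=` @l2 R W by move=> y [/Y_l2].
have [S [D [Y2 [Y21 Y2_unc] [S_finite S_tail S_root]]]] :=
  l2_support_delta_system W_omega1 Y1_l2 Y1_unc (mulr_gt0 t_gt0 eta_gt0).
have [sD sDE] : exists s : seq W, D = [set` s].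
  have [x [y [Y2x Y2y xy]]] := not_countable_two Y2_unc.
  apply/finite_seqP; rewrite -(S_root x y Y2x Y2y xy); exact: finite_setIl.
have [rho [rho_gt0 rho_le rho_sD]] : exists rho, [/\ 0 < rho, rho <= eta
    & (size sD)%:R * rho ^+ 2 <= eta].
  by apply: tolerance_exists => //; lra.
have [Y3 [Y32 Y3_unc] Y3_close] := not_countable_close sD Y2_unc rho_gt0.
have [Tc Y4_unc] := not_countable_level (fun z => sqsum z (S z `\` D)) Y3_unc rho_gt0.
have [gc U_unc] := not_countable_level
  (fun z => supsqrt F (fun a => sqsum z (a `&` (S z `\` D)))) Y4_unc rho_gt0.
set U := _ `&` _ in U_unc.
have UY1 z : U z -> Y z /\ sqsum z [set i | `|z i| < m] <= delta ^+ 2 / 64.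
  by move=> [[/Y32 /Y21 []]].
have U_l2 : U `<=` @l2 R W by move=> z /UY1 [/Y_l2].
apply: (refined_family_false (U := U) (Tc := Tc) (gc := gc) delta_gt0 m_gt0 budget U_unc
  U_l2 _ _ _ S_finite _ _ _ rho_gt0 rho_le).
- by move=> x y /UY1 [Yx _] /UY1 [Yy _]; apply: Y_equilateral.
- by move=> z /UY1 [/Y_bounded].
- by move=> z /UY1 [].
- by move=> z [[/Y32 /S_tail]].
- by move=> x y [[/Y32 Y2x _] _] [[/Y32 Y2y _] _]; apply: S_root.
- move=> x y Ux Uy; have [[[Y3x _] _] [[Y3y _] _]] := (Ux, Uy).
  rewrite sDE; apply: le_trans rho_sD.
  exact: sqsum_sub_seq_le (U_l2 _ Ux) (U_l2 _ Uy) (Y3_close x y Y3x Y3y).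
- by move=> z [[_ /= Tz] _].
- by move=> z [_ /= Gz].
Qed.

End equilateral.
End strong_T0_family.

Unset Implicit Arguments. Set Strict Implicit.

Theorem proposition4p5 (R : realType) (d : Order.disp_t) (W : orderType d)
  (I J : Type) (i0 i1 : I) (c : W -> W -> I * J) :
  is_omega1 W -> i0 <> i1 -> inhabited J ->
  strong_T_coloring i0 i1 c ->
  ~ exists Y : set (W -> R),
      Y `<=` @l2 R W /\ ~ countable Y /\
      exists delta : R, 0 < delta /\
        forall y y', Y y -> Y y' -> y <> y' ->
          norm2A (T0_family i0 c) (y \- y') = delta.
Proof.
move=> W_omega1 i01 _ c_strong [Y [Y_l2 [Y_uncountable [delta [delta_gt0 Y_equilateral]]]]].
exact: (equilateral_false (R := R) W_omega1 i01 c_strong Y_l2 Y_uncountable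
  delta_gt0 Y_equilateral).
Qed.
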